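(* Let $d\ge 1$, $\boldsymbol{w}\in\mathbb{R}^d\setminus\{\boldsymbol{0}\}$, $b\in\mathbb{R}$, and let $C(\boldsymbol{x})=\mathbf{1}\{\boldsymbol{w}\cdot\boldsymbol{x}+b>0\}$ be the linear classifier. Let $\boldsymbol{\mu}_0\in\mathbb{R}^d$ be a unit vector, with sign chosen so that $\boldsymbol{w}\cdot\boldsymbol{\mu}_0\ge 0$. Let $\varepsilon>0$, $\delta\ge 0$. Put $\boldsymbol{v}_0=\boldsymbol{w}/\|\boldsymbol{w}\|$, let $\theta\in[0,\pi/2]$ be the angle with $\cos\theta=\boldsymbol{v}_0\cdot\boldsymbol{\mu}_0$, let $\boldsymbol{n}_0=\boldsymbol{n}/\|\boldsymbol{n}\|$ with $\boldsymbol{n}=\boldsymbol{v}_0-(\boldsymbol{v}_0\cdot\boldsymbol{\mu}_0)\boldsymbol{\mu}_0$ (if $\boldsymbol{n}=\boldsymbol{0}$, let $\boldsymbol{n}_0$ be any unit vector orthogonal to $\boldsymbol{\mu}_0$), so that $\boldsymbol{v}_0=\cos\theta\,\boldsymbol{\mu}_0+\sin\theta\,\boldsymbol{n}_0$. Let $\beta=\min(\varepsilon\cos\theta,\delta)$ and $\boldsymbol{u}_2=\beta\boldsymbol{\mu}_0+\sqrt{\varepsilon^2-\beta^2}\,\boldsymbol{n}_0$. Then $$\Omega_\varepsilon=\Omega(\varepsilon\boldsymbol{v}_0)\cup\Omega(-\varepsilon\boldsymbol{v}_0),\qquad \Omega_{\varepsilon,\delta}=\Omega(\boldsymbol{u}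_2)\cup\Omega(-\boldsymbol{u}_2).$$
   Context: All norms are Euclidean ($\ell_2$). For $\boldsymbol{v}\in\mathbb{R}^d$, $\Omega(\boldsymbol{v})=\{\boldsymbol{x}\in\mathbb{R}^d: C(\boldsymbol{x}+\boldsymbol{v})\neq C(\boldsymbol{x})\}$. A point $\boldsymbol{x}'$ is an $\varepsilon$-adversarial example of $\boldsymbol{x}$ if $\|\boldsymbol{x}-\boldsymbol{x}'\|\le\varepsilon$ and $C(\boldsymbol{x})\ne C(\boldsymbol{x}')$; it is an $(\varepsilon,\delta)$-strong-adversarial example of $\boldsymbol{x}$ if moreover $|(\boldsymbol{x}-\boldsymbol{x}')\cdot\boldsymbol{\mu}_0|\le\delta$. $\Omega_\varepsilon$ is the set of $\boldsymbol{x}$ having an $\varepsilon$-adversarial example and $\Omega_{\varepsilon,\delta}$ the set of $\boldsymbol{x}$ having an $(\varepsilon,\delta)$-strong-adversarial example. ($\boldsymbol{\mu}_0$ plays the role of the ''signal direction''; since the strong-adversarial condition is invariant under $\boldsymbol{\mu}_0\mapsto-\boldsymbol{\mu}_0$, its sign is fixed so that the angle $\theta$ lies in $[0,\pi/2]$.) *)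

From HB Require Import structures.
From mathcomp Require Import all_boot all_order all_algebra.
From mathcomp Require Import classical_sets reals.
Set Implicit Arguments. Unset Strict Implicit. Unset Printing Implicit Defensive.
Import Order.TTheory GRing.Theory Num.Theory.
Local Open Scope ring_scope.
Local Open Scope classical_set_scope.

Section Defs.
Variables (R : realType) (d : nat).
Implicit Types (u v x w mu : 'rV[R]_d).

Definition dot u v : R := \sum_(i < d) u 0 i * v 0 i.
Definition enorm u : R := Num.sqrt (dot u u).

Definition lin_clf w (b : R) : 'rV[R]_d -> bool := fun x => 0 < dot w x + b.

Definition Omega (C : 'rV[R]_d -> bool) v : set 'rV[R]_d :=
  [set x | C (x + v) <> C x].

Definition adv_example (C : 'rV[R]_d -> bool) (eps : R) x x' : Prop :=
  enorm (x - x') <= eps /\ C x <> C x'.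

Definition strong_adv_example (C : 'rV[R]_d -> bool) (mu0 : 'rV[R]_d)
  (eps delta : R) x x' : Prop :=
  adv_example C eps x x' /\ `|dot (x - x') mu0| <= delta.

Definition Omega_eps (C : 'rV[R]_d -> bool) (eps : R) : set 'rV[R]_d :=
  [set x | exists x', adv_example C eps x x'].

Definition Omega_eps_delta (C : 'rV[R]_d -> bool) (mu0 : 'rV[R]_d)
  (eps delta : R) : set 'rV[R]_d :=
  [set x | exists x', strong_adv_example C mu0 eps delta x x'].
End Defs.

From HB Require Import structures.
From mathcomp Require Import all_boot all_order all_algebra.
From mathcomp Require Import classical_sets reals.
From mathcomp Require Import ring lra.
Import Order.TTheory GRing.Theory Num.Theory.
Local Open Scope ring_scope.
Local Open Scope classical_set_scope.

(* For a linear classifier, whether [x] has an adversarial example [x'] with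
   [x - x'] in a symmetric set [P] depends only on how far [w.y] ranges over
   [P]; so it is decided by a maximiser [u] of [w.y] on [P]: the label flips
   within [P] iff it flips under [u] or [-u].  On the ball of radius [eps] the
   maximiser is [eps v0] (Cauchy-Schwarz).  On the ball cut by the slab
   [|y.mu0| <= delta], Bessel's inequality reduces the problem to the plane of
   [mu0] and [n0], where [w.y] is proportional to [cos th * s + sin th * t];
   over the disc of radius [eps] cut at [|s| <= delta] it is maximal at
   [s = min (eps cos th) delta], [t = sqrt (eps^2 - s^2)], i.e. at [u2]. *)

Section PlaneBounds.
Variable R : rcfType.
Implicit Types p q r x y e : R.

Lemma cauchy_schwarz2 p q r x y e : 0 <= r -> 0 <= e ->
  p ^+ 2 + q ^+ 2 = r ^+ 2 -> x ^+ 2 + y ^+ 2 <= e ^+ 2 -> p * x + q * y <= r * e.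
Proof.
move=> r0 e0 pqr xye.
have lagrange : (p * x + q * y) ^+ 2 + (p * y - q * x) ^+ 2
              = (p ^+ 2 + q ^+ 2) * (x ^+ 2 + y ^+ 2) by ring.
have : (p * x + q * y) ^+ 2 <= (r * e) ^+ 2.
  rewrite exprMn; rewrite pqr in lagrange.
  have := sqr_ge0 (p * y - q * x); have := ler_wpM2l (sqr_ge0 r) xye; lra.
move=> sq; apply: le_trans (ler_norm _) _.
by rewrite -ler_sqr ?nnegrE ?normr_ge0 ?mulr_ge0 // real_normK ?num_real.
Qed.

Lemma disc_slab_max (c s e dl m x y : R) :
  0 <= c -> 0 <= s -> c ^+ 2 + s ^+ 2 = 1 -> 0 <= e -> 0 <= dl ->
  m = Num.min (e * c) dl -> x ^+ 2 + y ^+ 2 <= e ^+ 2 -> `|x| <= dl ->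
  c * x + s * y <= c * m + s * Num.sqrt (e ^+ 2 - m ^+ 2).
Proof.
move=> c0 s0 cs e0 dl0 -> xye xdl.
have [ecdl | dlec] := leP (e * c) dl.
  rewrite (_ : e ^+ 2 - (e * c) ^+ 2 = (e * s) ^+ 2); last first.
    by rewrite -[e ^+ 2]mulr1 -cs; ring.
  rewrite sqrtr_sqr ger0_norm ?mulr_ge0 //.
  have -> : c * (e * c) + s * (e * s) = 1 * e by rewrite -cs; ring.
  by apply: cauchy_schwarz2 => //; rewrite expr1n.
set tau := Num.sqrt _.
have c1 : c <= 1 by nra.
have dle : dl < e by nra.
have tau2 : tau ^+ 2 = e ^+ 2 - dl ^+ 2 by rewrite sqr_sqrtr //; nra.
have tau0 : 0 < tau by rewrite sqrtr_gt0; nra.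
have tangent : s * dl <= c * tau.
  have : (s * dl) ^+ 2 <= (c * tau) ^+ 2 by rewrite !exprMn tau2; nra.
  by rewrite ler_sqr ?nnegrE ?mulr_ge0 ?(ltW tau0).
have radial : dl * x + tau * y <= e * e by apply: cauchy_schwarz2 => //; lra.
have xle : x <= dl := le_trans (ler_norm x) xdl.
(* [(c, s)] is a nonnegative combination of [(1, 0)], controlled by the slab,
   and of the corner [(dl, tau)], controlled by the disc. *)
rewrite -(ler_pM2l tau0).
have -> : tau * (c * x + s * y)
          = (c * tau - s * dl) * x + s * (dl * x + tau * y) by ring.
have -> : tau * (c * dl + s * tau) = (c * tau - s * dl) * dl + s * (e * e).
  by rewrite -expr2 (_ : e ^+ 2 = dl ^+ 2 + tau ^+ 2); [ring | lra].
by apply: lerD; apply: ler_wpM2l; lra.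
Qed.
End PlaneBounds.

Section Dot.
Context {R : realType} {d : nat}.
Implicit Types (u v x y : 'rV[R]_d).

Lemma dotC u v : dot u v = dot v u.
Proof. by apply: eq_bigr => i _; rewrite mulrC. Qed.

Lemma dotDl u v x : dot (u + v) x = dot u x + dot v x.
Proof. by rewrite /dot -big_split; apply: eq_bigr => i _; rewrite mxE mulrDl. Qed.

Lemma dotZl (k : R) u v : dot (k *: u) v = k * dot u v.
Proof. by rewrite /dot mulr_sumr; apply: eq_bigr => i _; rewrite mxE mulrA. Qed.

Lemma dotNl u v : dot (- u) v = - dot u v.
Proof. by rewrite -scaleN1r dotZl mulN1r. Qed.

Lemma dotBl u v x : dot (u - v) x = dot u x - dot v x.
Proof. by rewrite dotDl dotNl. Qed.

Lemma dotDr u v x : dot x (u + v) = dot x u + dot x v.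
Proof. by rewrite dotC dotDl !(dotC x). Qed.

Lemma dotZr (k : R) u v : dot v (k *: u) = k * dot v u.
Proof. by rewrite dotC dotZl dotC. Qed.

Lemma dotNr u v : dot v (- u) = - dot v u.
Proof. by rewrite dotC dotNl dotC. Qed.

Lemma dotBr u v x : dot x (u - v) = dot x u - dot x v.
Proof. by rewrite dotDr dotNr. Qed.

Lemma dot_ge0 u : 0 <= dot u u.
Proof. by apply: sumr_ge0 => i _; rewrite -expr2 sqr_ge0. Qed.

Lemma dot_gt0 u : u != 0 -> 0 < dot u u.
Proof.
apply: contraNT; rewrite -leNgt => u_le0; apply/eqP/matrixP => i j.
have sq_ge0 (k : 'I_d) : true -> 0 <= u 0 k * u 0 k by rewrite -expr2 sqr_ge0.
have uu0 : dot u u = 0 by apply/le_anti; rewrite u_le0 dot_ge0.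
have /eqP := psumr_eq0P sq_ge0 uu0 (i := j) isT.
by rewrite mulf_eq0 orbb (ord1 i) mxE => /eqP.
Qed.

Lemma sqr_enorm u : enorm u ^+ 2 = dot u u.
Proof. exact/sqr_sqrtr/dot_ge0. Qed.

Lemma enorm_ge0 u : 0 <= enorm u.
Proof. exact: sqrtr_ge0. Qed.

Lemma enorm0 : enorm (0 : 'rV[R]_d) = 0.
Proof. by rewrite /enorm /dot big1 ?sqrtr0 // => i _; rewrite mxE mul0r. Qed.

Lemma enormN u : enorm (- u) = enorm u.
Proof. by rewrite /enorm dotNl dotNr opprK. Qed.

Lemma enorm_le u (e : R) : 0 <= e -> (enorm u <= e) = (dot u u <= e ^+ 2).
Proof. by move=> e0; rewrite -sqr_enorm ler_sqr ?nnegrE ?enorm_ge0. Qed.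

Lemma dot_normalize u : u != 0 ->
  dot ((enorm u)^-1 *: u) ((enorm u)^-1 *: u) = 1.
Proof.
move=> u0; have nu0 : enorm u != 0 by rewrite gt_eqF // sqrtr_gt0 dot_gt0.
by rewrite dotZl dotZr -sqr_enorm mulrA -expr2 exprVn mulVf // expf_neq0.
Qed.

Lemma dot_le_unit v y (e : R) : dot v v = 1 -> 0 < e -> dot y y <= e ^+ 2 ->
  dot v y <= e.
Proof.
move=> v1 e0 ye; have := dot_ge0 (e *: v - y).
rewrite !dotBl !dotBr !dotZl !dotZr v1 (dotC y v); nra.
Qed.

Lemma bessel2 m n y : dot m m = 1 -> dot n n = 1 -> dot n m = 0 ->
  (dot m y) ^+ 2 + (dot n y) ^+ 2 <= dot y y.
Proof.
move=> m1 n1 nm; set s := dot m y; set t := dot n y.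
have := dot_ge0 (y - s *: m - t *: n).
rewrite !dotBl !dotBr !dotZl !dotZr m1 n1 nm (dotC m n) nm.
rewrite (dotC y m) (dotC y n) -/s -/t; nra.
Qed.

(* When [v] is collinear with [mu], [n] vanishes and the coefficient [enorm n]
   kills whatever unit vector [n0] was chosen. *)
Lemma unit_orth_decomp v mu n0 : dot v v = 1 -> dot mu mu = 1 ->
  let n := v - dot v mu *: mu in
  (if n != 0 then n0 = (enorm n)^-1 *: n else enorm n0 = 1 /\ dot n0 mu = 0) ->
  [/\ dot n0 n0 = 1, dot n0 mu = 0, v = dot v mu *: mu + enorm n *: n0
    & dot v mu ^+ 2 + enorm n ^+ 2 = 1].
Proof.
move=> v1 mu1 n; set c := dot v mu.
have nmu : dot n mu = 0 by rewrite dotBl dotZl mu1 mulr1 subrr.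
have n_sq : enorm n ^+ 2 = 1 - c ^+ 2.
  rewrite sqr_enorm !dotBl !dotBr !dotZl !dotZr v1 mu1 (dotC mu v) -/c.
  by rewrite mulr1 subrr subr0 expr2.
case: (eqVneq n 0) => [n_eq0 | n_neq0] /= n0E.
  case: n0E => n0_1 n0mu; split=> //; first by rewrite -sqr_enorm n0_1 expr1n.
    by rewrite n_eq0 enorm0 scale0r addr0; apply/subr0_eq.
  by rewrite n_sq; ring.
have nn0 : enorm n != 0 by rewrite gt_eqF // sqrtr_gt0 dot_gt0.
split; rewrite ?n0E.
- exact: dot_normalize.
- by rewrite dotZl nmu mulr0.
- by rewrite scalerA mulfV // scale1r addrC subrK.
- by rewrite n_sq; ring.
Qed.

End Dot.

Section LinearClassifier.
Context {R : realType} {d : nat}.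
Implicit Types (w u x y : 'rV[R]_d).

(* Since [w.x' = w.x - w.(x - x')], a flip needs [w.(x - x')] or its opposite
   to push [w.x + b] across [0], and [w.u] pushes at least as far. *)
Lemma lin_clf_adv_region w b (P : 'rV[R]_d -> Prop) u :
  (forall y, P y -> P (- y)) -> P u -> (forall y, P y -> dot w y <= dot w u) ->
  [set x | exists x', P (x - x') /\ lin_clf w b x <> lin_clf w b x'] =
  Omega (lin_clf w b) u `|` Omega (lin_clf w b) (- u).
Proof.
move=> PN Pu u_max; apply/seteqP; split=> x /=.
- move=> [x' [Pxx' flip]]; rewrite /Omega /lin_clf /= in flip *.
  have le_u := u_max _ Pxx'; have le_Nu := u_max _ (PN _ Pxx').
  rewrite dotBr in le_u; rewrite dotNr dotBr in le_Nu; rewrite !dotDr dotNr.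
  case: (ltrP 0 (dot w x + b)) flip => hx;
    case: (ltrP 0 (dot w x' + b)) => hx' //= _.
  + by right; apply/negP; rewrite -leNgt; lra.
  + by left; have -> : 0 < dot w x + dot w u + b by lra.
- case=> /= flip.
  + exists (x + u); split; last by move=> e; apply: flip; rewrite e.
    by rewrite opprD addrA subrr add0r; apply: PN.
  + exists (x - u); split; last by move=> e; apply: flip; rewrite e.
    by rewrite opprB addrC subrK.
Qed.

Lemma Omega_eps_deltaE C mu (e dl : R) : Omega_eps_delta C mu e dl =
  [set x | exists x',
    (enorm (x - x') <= e /\ `|dot (x - x') mu| <= dl) /\ C x <> C x'].
Proof. by apply/seteqP; split=> x /= [x' [[? ?] ?]]; exists x'. Qed.

Lemma Omega_eps_lin_clf w b (e : R) : w != 0 -> 0 < e ->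
  let v := (enorm w)^-1 *: w in
  Omega_eps (lin_clf w b) e =
  Omega (lin_clf w b) (e *: v) `|` Omega (lin_clf w b) (- (e *: v)).
Proof.
move=> w0 e0 v; have e_ge0 := ltW e0.
have w_gt0 : 0 < enorm w by rewrite sqrtr_gt0 dot_gt0.
have dot_w y : dot w y = enorm w * dot v y.
  by rewrite /v dotZl mulrA mulfV ?gt_eqF ?mul1r.
have v1 : dot v v = 1 by exact: dot_normalize.
apply: (lin_clf_adv_region w b (fun y => enorm y <= e)).
- by move=> y; rewrite enormN.
- by rewrite enorm_le // dotZl dotZr v1 mulr1 expr2.
- move=> y; rewrite enorm_le // => y_le.
  by rewrite !dot_w dotZr v1 mulr1 ler_wpM2l ?enorm_ge0 // dot_le_unit.
Qed.

Lemma Omega_eps_delta_lin_clf w b mu n0 (a c s e dl : R) :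
  0 < a -> 0 <= c -> 0 <= s -> c ^+ 2 + s ^+ 2 = 1 ->
  dot mu mu = 1 -> dot n0 n0 = 1 -> dot n0 mu = 0 ->
  w = a *: (c *: mu + s *: n0) -> 0 < e -> 0 <= dl ->
  let m := Num.min (e * c) dl in
  let u := m *: mu + Num.sqrt (e ^+ 2 - m ^+ 2) *: n0 in
  Omega_eps_delta (lin_clf w b) mu e dl =
  Omega (lin_clf w b) u `|` Omega (lin_clf w b) (- u).
Proof.
move=> a0 c0 s0 cs mu1 n1 n0mu wE e0 dl0 m u; have e_ge0 := ltW e0.
have dot_w y : dot w y = a * (c * dot mu y + s * dot n0 y).
  by rewrite wE dotZl dotDl !dotZl.
have m0 : 0 <= m by rewrite le_min dl0 andbT mulr_ge0.
have m_dl : m <= dl by rewrite ge_min lexx orbT.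
have m_e : m ^+ 2 <= e ^+ 2.
  have c1 : c <= 1 by nra.
  have : m <= e * c by rewrite ge_min lexx.
  rewrite ler_sqr ?nnegrE //; nra.
pose tau := Num.sqrt (e ^+ 2 - m ^+ 2).
have tau2 : tau ^+ 2 = e ^+ 2 - m ^+ 2 by rewrite sqr_sqrtr // subr_ge0.
have u_mu : dot mu u = m.
  by rewrite dotDr !dotZr mu1 (dotC mu n0) n0mu mulr1 mulr0 addr0.
have u_n0 : dot n0 u = tau by rewrite dotDr !dotZr n1 n0mu mulr0 mulr1 add0r.
rewrite Omega_eps_deltaE.
apply: (lin_clf_adv_region w b (fun y => enorm y <= e /\ `|dot y mu| <= dl)).
- by move=> y [y_le y_dl]; rewrite enormN dotNl normrN.
- split; last by rewrite dotC u_mu ger0_norm.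
  rewrite enorm_le // {1}/u dotDl !dotZl u_mu u_n0 -!expr2 tau2; lra.
- move=> y [y_le y_dl]; rewrite !dot_w u_mu u_n0 ler_wpM2l ?(ltW a0) //.
  apply: (@disc_slab_max _ c s e dl) => //.
  + by rewrite enorm_le // in y_le; exact: le_trans (bessel2 _ _ _ mu1 n1 n0mu) y_le.
  + by rewrite dotC.
Qed.

End LinearClassifier.

Theorem lemma1 (R : realType) (d : nat) (w : 'rV[R]_d) (b : R)
  (mu0 n0 : 'rV[R]_d) (eps delta : R) :
  (0 < d)%N -> w != 0 ->
  enorm mu0 = 1 -> 0 <= dot w mu0 ->
  0 < eps -> 0 <= delta ->
  let v0 := (enorm w)^-1 *: w in
  let costh := dot v0 mu0 in
  let n := v0 - costh *: mu0 in
  (* n0 = n/|n| if n <> 0, otherwise an arbitrary unit vector orthogonal to mu0 *)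
  (if n != 0 then n0 = (enorm n)^-1 *: n
   else enorm n0 = 1 /\ dot n0 mu0 = 0) ->
  let beta := Num.min (eps * costh) delta in
  let u2 := beta *: mu0 + Num.sqrt (eps ^+ 2 - beta ^+ 2) *: n0 in
  let C := lin_clf w b in
  Omega_eps C eps = Omega C (eps *: v0) `|` Omega C (- (eps *: v0)) /\
  Omega_eps_delta C mu0 eps delta = Omega C u2 `|` Omega C (- u2).
Proof.
move=> _ w0 mu1 wmu0 e0 dl0 v0 c n n0E beta u2 C.
split; first exact: Omega_eps_lin_clf.
have w_gt0 : 0 < enorm w by rewrite sqrtr_gt0 dot_gt0.
have wE : w = enorm w *: v0 by rewrite /v0 scalerA mulfV ?gt_eqF // scale1r.
have v1 : dot v0 v0 = 1 by exact: dot_normalize.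
have m1 : dot mu0 mu0 = 1 by rewrite -sqr_enorm mu1 expr1n.
have c0 : 0 <= c by rewrite /c /v0 dotZl mulr_ge0 ?invr_ge0 ?enorm_ge0.
clearbody v0.
have [n1 n0mu] := unit_orth_decomp _ _ _ v1 m1 n0E.
rewrite -/c -/n => v0E cs.
rewrite v0E in wE.
apply: (Omega_eps_delta_lin_clf _ _ _ _ (enorm w) c (enorm n)) => //.
exact: enorm_ge0.
Qed.
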